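(* Let ${\bold H}$ be a function with domain $\omega$ such that each ${\bold H}(i)$ is a countable set with at least two elements, and let $(K,\Sigma,\Sigma^\bot)$ be a semi--creating triple for ${\bold H}$ which is linked, semi--gluing and has the cutting property. Then the forcing notion $\mathbb{Q}^+_\infty(K,\Sigma,\Sigma^\bot)$ is $\sigma$-$*$--linked.
   Context: A semi--creature for ${\bold H}$ is a quadruple $t=(\mathbf{dom}[t],\mathbf{sval}[t],\mathbf{nor}[t],\mathbf{dis}[t])$ with $\mathbf{dom}[t]$ a non-empty finite subset of $\omega$, $\emptyset\neq\mathbf{sval}[t]\subseteq\prod_{i\in\mathbf{dom}[t]}{\bold H}(i)$, $\mathbf{nor}[t]\in[0,\infty)\cup\{\infty\}$, $\mathbf{dis}[t]$ hereditarily countable, and $\mathbf{sval}[t]=\prod_{i\in\mathbf{dom}[t]}{\bold H}(i)$ iff $\mathbf{nor}[t]=\infty$. A semi--composition operation $\Sigma$ on a set $K$ of semi--creatures maps finite subsets of $K$ to subsets of $K$ with: (a) if $s\in\Sigma(\mathcal S_s)$ for all $s\in\mathcal S$ then $\Sigma(\mathcal S)\subseteq\Sigma(\bigcup_s\mathcal S_s)$; (b) $t\in\Sigma(\{t\})$, $\Sigma(\emptyset)=\emptyset$; (c) if $t\in\Sigma(\mathcal S)$ then $\mathbf{dom}[t]=\bigcup_{s\in\mathcal S}\mathbf{dom}[s]$, $v\restriction\mathbf{dom}[s]\in\mathbf{sval}[s]$ for $v\in\mathbf{sval}[t]$, $s\in\mathcal S$, and distinct members of $\mathcal S$ have disjoint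 domains. A semi--decomposition operation $\Sigma^\bot$ assigns to each $t\in K$ a non-empty family of finite subsets of $K$ with: (a) if $\{s_0,\dots,s_k\}\in\Sigma^\bot(t)$ and $\mathcal S_i\in\Sigma^\bot(s_i)$ then $\bigcup_i\mathcal S_i\in\Sigma^\bot(t)$; (b) $\{t\}\in\Sigma^\bot(t)$; (c) if $\mathcal S\in\Sigma^\bot(t)$ then $\mathbf{dom}[t]=\bigcup_{s\in\mathcal S}\mathbf{dom}[s]$ and each $v\in\prod_{i\in\mathbf{dom}[t]}{\bold H}(i)$ with $v\restriction\mathbf{dom}[s]\in\mathbf{sval}[s]$ for all $s\in\mathcal S$ is in $\mathbf{sval}[t]$. $(K,\Sigma,\Sigma^\bot)$ is then a semi--creating triple. Conditions of $\mathbb{Q}^+_\infty(K,\Sigma,\Sigma^\bot)$ are sequences $p=(w^p,t^p_0,t^p_1,\dots)$ with $w^p$ a finite function, $w^p(i)\in{\bold H}(i)$, $t^p_i\in K$, $\mathrm{dom}(w^p)$ and the $\mathbf{dom}[t^p_i]$ partitioning $\omega$, $\mathbf{nor}[t^p_i]\neq\infty$ for all $i$ and $\lim_i\mathbf{nor}[t^p_i]=\infty$. $p\leq q$ ($q$ stronger) iff $q$ arises from $p$ by finitely many operations: deciding the value (for a finite $A\subseteq\omega$, extend $w$ to $w^*$ with domain $\mathrm{dom}(w)\cup\bigcup_{i\in A}\mathbf{dom}[t_i]$, $w^*\restriction\mathbf{dom}[t_i]\in\mathbf{sval}[t_i]$ for $i\in A$, and keep exactly the $t_i$, $i\notin A$);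 applying $\Sigma$ (replace the sequence by $t^*_i\in\Sigma(\{t_j:j\in A_i\})$ for pairwise disjoint finite $A_i\subseteq\omega$); applying $\Sigma^\bot$ (new sequence $t^*_j$ with pairwise disjoint non-empty finite $A_i$ and $\{t^*_j:j\in A_i\}\in\Sigma^\bot(t_i)$); results of operations must be conditions. The triple is linked if for all $t_0,t_1\in K$ with $\mathbf{nor}[t_0],\mathbf{nor}[t_1]>1$ and $\mathbf{dom}[t_0]=\mathbf{dom}[t_1]$ there is $s\in\Sigma(\{t_0\})\cap\Sigma(\{t_1\})$ with $\mathbf{nor}[s]\geq\min\{\mathbf{nor}[t_0],\mathbf{nor}[t_1]\}-1$. It is semi--gluing if for all $t_0,\dots,t_n\in K$ with pairwise disjoint domains there is $s\in\Sigma(\{t_0,\dots,t_n\})$ with $\mathbf{nor}[s]\geq\min_k\mathbf{nor}[t_k]-1$. It has the cutting property if for every $t\in K$ with $\mathbf{nor}[t]>1$ and every non-empty proper subset $z$ of $\mathbf{dom}[t]$ there are $s_0,s_1\in K$ with $\mathbf{dom}[s_0]=z$, $\mathbf{dom}[s_1]=\mathbf{dom}[t]\setminus z$, $\mathbf{nor}[s_\ell]\geq\mathbf{nor}[t]-1$ ($\ell=0,1$) and $\{s_0,s_1\}\in\Sigma^\bot(t)$. A forcing notion $\mathbb{Q}$ is $\sigma$-$*$--linked if for every $n\in\omega$ there is a partition $\langle A_i:i\in\omega\rangle$ of $\mathbb{Q}$ such that any $q_0,\dots,q_n$ lying in one $A_i$ have a common upper bound in $\mathbb{Q}$. *)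

From HB Require Import structures.
From mathcomp Require Import all_boot all_order all_algebra.
From mathcomp Require Import all_classical all_reals all_analysis.
From Stdlib Require Import Relations.Relation_Operators.

Set Implicit Arguments.
Unset Strict Implicit.
Unset Printing Implicit Defensive.

Import Order.TTheory GRing.Theory Num.Theory.
Local Open Scope classical_set_scope.
Local Open Scope ereal_scope.

Section Creatures.
Variables (R : realType) (H : nat -> countType) (D : Type).

(* partial functions: v i = None means i is not in the domain;
   v i = Some x means v(i) = x, with x in H(i) *)
Definition pval := forall i : nat, option (H i).
Definition pdom (v : pval) : set nat := [set i | v i <> None].
(* the product  prod_{i in A} H(i)  as a set of partial functions *)
Definition prodH (A : set nat) : set pval := [set v | pdom v = A].
Definition restr (A : set nat) (v : pval) : pval :=
  fun i => if `[< A i >] then v i else None.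

Record screature := SCreature {
  sdom : set nat; ssval : set pval; snor : \bar R; sdis : D }.

Definition is_semi_creature (t : screature) : Prop :=
  [/\ finite_set (sdom t), sdom t !=set0, ssval t !=set0,
      ssval t `<=` prodH (sdom t) &
      (0 <= snor t) /\ (ssval t = prodH (sdom t) <-> snor t = +oo)].

Definition semi_composition (K : set screature)
    (Sig : set screature -> set screature) : Prop :=
  [/\ (forall S, finite_set S -> S `<=` K -> Sig S `<=` K),
      (forall S (F : screature -> set screature), finite_set S -> S `<=` K ->
         (forall s, S s -> [/\ finite_set (F s), F s `<=` K & Sig (F s) s]) ->
         Sig S `<=` Sig (\bigcup_(s in S) F s)),
      (forall t, K t -> Sig [set t] t),
      Sig set0 = set0 &
      (forall S t, finite_set S -> S `<=` K -> Sig S t ->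
         [/\ sdom t = \bigcup_(s in S) sdom s,
             (forall v s, ssval t v -> S s -> ssval s (restr (sdom s) v)) &
             (forall s1 s2, S s1 -> S s2 -> s1 <> s2 ->
                sdom s1 `&` sdom s2 = set0)])].

Definition semi_decomposition (K : set screature)
    (Sb : screature -> set (set screature)) : Prop :=
  [/\ (forall t, K t ->
         Sb t !=set0 /\ (forall S, Sb t S -> finite_set S /\ S `<=` K)),
      (forall t S (F : screature -> set screature), K t -> Sb t S ->
         (forall s, S s -> Sb s (F s)) -> Sb t (\bigcup_(s in S) F s)),
      (forall t, K t -> Sb t [set t]) &
      (forall t S, K t -> Sb t S ->
         sdom t = \bigcup_(s in S) sdom s /\
         (forall v, prodH (sdom t) v ->
            (forall s, S s -> ssval s (restr (sdom s) v)) -> ssval t v))].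

Definition semi_creating_triple (K : set screature)
    (Sig : set screature -> set screature)
    (Sb : screature -> set (set screature)) : Prop :=
  [/\ (forall t, K t -> is_semi_creature t),
      semi_composition K Sig & semi_decomposition K Sb].

Definition linked (K : set screature) (Sig : set screature -> set screature) :=
  forall t0 t1, K t0 -> K t1 -> 1%:E < snor t0 -> 1%:E < snor t1 ->
    sdom t0 = sdom t1 ->
    exists s, [/\ Sig [set t0] s, Sig [set t1] s &
                  Order.min (snor t0) (snor t1) - 1%:E <= snor s].

Definition semi_gluing (K : set screature) (Sig : set screature -> set screature) :=
  forall (n : nat) (ts : nat -> screature),
    (forall k, (k <= n)%N -> K (ts k)) ->
    (forall k l, (k <= n)%N -> (l <= n)%N -> k <> l ->
       sdom (ts k) `&` sdom (ts l) = set0) ->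
    exists s, Sig [set ts k | k in `I_n.+1] s /\
      \big[Order.min/+oo]_(k < n.+1) snor (ts k) - 1%:E <= snor s.

Definition cutting_property (K : set screature)
    (Sb : screature -> set (set screature)) :=
  forall t (z : set nat), K t -> 1%:E < snor t -> z !=set0 -> z `<` sdom t ->
    exists s0 s1, [/\ K s0, K s1, sdom s0 = z, sdom s1 = sdom t `\` z &
      [/\ snor t - 1%:E <= snor s0, snor t - 1%:E <= snor s1 &
          Sb t [set s0; s1]]].

Record cond := Cond { cw : pval; ct : nat -> screature }.

Definition is_cond (K : set screature) (p : cond) : Prop :=
  [/\ finite_set (pdom (cw p)), (forall i, K (ct p i)),
      (forall i j, i <> j -> sdom (ct p i) `&` sdom (ct p j) = set0),
      (forall i, pdom (cw p) `&` sdom (ct p i) = set0) &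
      [/\ (forall n, pdom (cw p) n \/ exists i, sdom (ct p i) n),
          (forall i, snor (ct p i) <> +oo) &
          (fun i => snor (ct p i)) @ \oo --> +oo]].

Definition decide_step (p q : cond) : Prop :=
  exists A : set nat, finite_set A /\
  [/\ (forall i, pdom (cw p) i -> cw q i = cw p i),
      pdom (cw q) = pdom (cw p) `|` \bigcup_(i in A) sdom (ct p i),
      (forall i, A i -> ssval (ct p i) (restr (sdom (ct p i)) (cw q))) &
      exists e : nat -> nat, [/\ {homo e : m n / (m < n)%N},
                                range e = ~` A & ct q = ct p \o e]].

Definition sigma_step (Sig : set screature -> set screature) (p q : cond) :=
  cw q = cw p /\ exists A : nat -> set nat,
    [/\ (forall i, finite_set (A i)),
        (forall i j, i <> j -> A i `&` A j = set0) &
        (forall i, Sig (ct p @` A i) (ct q i))].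

Definition sigmabot_step (Sb : screature -> set (set screature)) (p q : cond) :=
  cw q = cw p /\ exists A : nat -> set nat,
    [/\ (forall i, finite_set (A i) /\ A i !=set0),
        (forall i j, i <> j -> A i `&` A j = set0) &
        (forall i, Sb (ct p i) (ct q @` A i))].

Definition one_op (K : set screature) (Sig : set screature -> set screature)
    (Sb : screature -> set (set screature)) (p q : cond) : Prop :=
  [/\ is_cond K p, is_cond K q &
      (decide_step p q \/ sigma_step Sig p q \/ sigmabot_step Sb p q)].

(* p <= q (q stronger): q arises from p by finitely many operations,
   all intermediate results being conditions *)
Definition Qle (K : set screature) (Sig : set screature -> set screature)
    (Sb : screature -> set (set screature)) : cond -> cond -> Prop :=
  clos_refl_trans cond (one_op K Sig Sb).

End Creatures.

Definition sigma_star_linked (T : Type) (Q : set T) (le : T -> T -> Prop) :=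
  forall n : nat, exists A : nat -> set T,
    [/\ (forall i, A i `<=` Q), \bigcup_i A i = Q,
        (forall i j, i <> j -> A i `&` A j = set0) &
        (forall i (q : nat -> T), (forall k, (k <= n)%N -> A i (q k)) ->
           exists r, Q r /\ forall k, (k <= n)%N -> le (q k) r)].

(* Fix n and let M := n + 5.  Deciding finitely many values strengthens any
   condition to one all of whose creatures have norm above M; the stem of the
   result is a finite partial function into countable sets, hence has a code in
   nat, and conditions are classified by the code of their strengthening.
   Given q_0, ..., q_n in one class, their strengthenings p_k share a stem u.
   Choose indices 0 = a_0 < a_1 < ... and boundaries 0 = b_0 < b_1 < ... such
   that, for every k, gluing the creatures of p_k with indices in [a_j, a_(j+1))
   gives a creature C_kj whose domain lies in [b_j, b_(j+2)) and meets both
   sides of b_(j+1).  Cutting C_kj at b_(j+1) and gluing the upper half of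
   C_k(j-1) to the lower half of C_kj yields a creature with domain
   [b_j, b_(j+1)) minus dom u, the same for all k; linking these n + 1
   creatures gives T_j, and (u, T_0, T_1, ...) extends every p_k.  Every step
   costs 1 in norm, n + 3 in total, which M absorbs. *)

From HB Require Import structures.
From mathcomp Require Import all_boot all_order all_algebra.
From mathcomp Require Import all_classical all_reals all_analysis.
From mathcomp Require Import zify lra.
From Stdlib Require Import Relations.Relation_Operators ClassicalEpsilon.

Set Implicit Arguments.
Unset Strict Implicit.
Unset Printing Implicit Defensive.

Import Order.TTheory GRing.Theory Num.Theory.
Local Open Scope classical_set_scope.
Local Open Scope ereal_scope.

Section PartialValues.
Variables (H : nat -> countType) (pt : forall i, H i).

Lemma pval_ext (v w : pval H) : (forall i, v i = w i) -> v = w.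
Proof. exact: functional_extensionality_dep. Qed.

Lemma pdom_restr A (v : pval H) : pdom (restr A v) = A `&` pdom v.
Proof.
by apply/seteqP; split=> i; rewrite /pdom /restr /=; case: asboolP => // Ai [].
Qed.

Definition pjoin (x y : pval H) (B : set nat) : pval H := fun i =>
  if x i is Some a then Some a else
  if y i is Some b then Some b else
  if `[< B i >] then Some (pt i) else None.

Lemma pdom_pjoin x y B :
  pdom x `<=` B -> pdom y `<=` B -> pdom (pjoin x y B) = B.
Proof.
move=> xB yB; apply/seteqP; split=> i; rewrite /pdom /pjoin /=.
- case ex: (x i) => [a|]; first by move=> _; apply: xB; rewrite /pdom /= ex.
  case ey: (y i) => [b|]; first by move=> _; apply: yB; rewrite /pdom /= ey.
  by case: asboolP.
- by move=> Bi; case: (x i) => //; case: (y i) => //; case: asboolP.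
Qed.

Lemma restr_pjoinl x y B A : pdom x = A -> restr A (pjoin x y B) = x.
Proof.
move=> dx; apply: pval_ext => i; rewrite /restr /pjoin.
case: asboolP => Ai; first by move: Ai; rewrite -dx /pdom /=; case: (x i).
by move: Ai; rewrite -dx /pdom /=; case: (x i) => // a; case.
Qed.

Lemma restr_pjoinr x y B A :
  pdom y = A -> pdom x `&` A = set0 -> restr A (pjoin x y B) = y.
Proof.
move=> dy dxA; apply: pval_ext => i; rewrite /restr /pjoin.
case: asboolP => Ai; last first.
  by move: Ai; rewrite -dy /pdom /=; case: (y i) => // b; case.
case ex: (x i) => [a|]; last by move: Ai; rewrite -dy /pdom /=; case: (y i).
have : (pdom x `&` A) i by split => //; rewrite /pdom /= ex.
by rewrite dxA.
Qed.

End PartialValues.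

Section NatFacts.
Local Open Scope nat_scope.

Lemma finite_set_ub (A : set nat) : finite_set A -> exists B, forall x, A x -> x < B.
Proof.
move=> /finite_seqP [s ->]; exists (\max_(y <- s) y).+1 => x /= xs.
by rewrite ltnS; apply: leq_bigmax_seq.
Qed.

Lemma ub_finite_set (A : set nat) B : (forall x, A x -> x < B) -> finite_set A.
Proof. by move=> AB; apply: (sub_finite_set _ (finite_II B)) => x /AB. Qed.

Lemma finite_image_itv (T : Type) (f : nat -> T) a b :
  finite_set (f @` [set i | a <= i < b]).
Proof. by apply/finite_image/(@ub_finite_set _ b) => i /andP []. Qed.

Lemma ex_forall_le_upclosed (P : nat -> nat -> Prop) n :
  (forall k I J, I <= J -> P k I -> P k J) ->
  (forall k, k <= n -> exists I, P k I) -> exists I, forall k, k <= n -> P k I.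
Proof.
move=> Pup; elim: n => [|n IH] Pex.
  by have [I PI] := Pex 0 (leqnn 0); exists I => k; rewrite leqn0 => /eqP ->.
have [I PI] := IH (fun k kn => Pex k (leqW kn)).
have [J PJ] := Pex n.+1 (leqnn _).
exists (maxn I J) => k; rewrite leq_eqVlt => /orP [/eqP ->|kn].
  by apply: (Pup _ J) => //; rewrite leq_maxr.
by apply: (Pup _ I); [rewrite leq_maxl | apply: PI].
Qed.

Lemma image_itv_shift (T : Type) (f : nat -> T) a b : a < b ->
  f @` [set i | a <= i < b] = [set f (a + i) | i in `I_(b - a).-1.+1].
Proof.
move=> ab; apply/seteqP; split => x [i /= hi <-].
  by exists (i - a); rewrite /= ?subnKC //; lia.
by exists (a + i) => //=; lia.
Qed.

Lemma double_pred_segment m i : (m.*2).-1 <= i < m.*2.+1 ->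
  i = m.*2 \/ exists2 m', m = m'.+1 & i = m'.*2.+1.
Proof.
case: m => [|m] mi; first by left; lia.
have [->|->] : i = m.*2.+1 \/ i = m.+1.*2 by lia.
  by right; exists m.
by left.
Qed.

Section Increasing.
Variable E : nat -> nat.
Hypothesis E_lt : forall m, E m < E m.+1.

Lemma incr_homo_leq : {homo E : m m' / m <= m'}.
Proof. exact: homo_leq leqnn leq_trans (fun m => ltnW (E_lt m)). Qed.

Lemma incr_geq m : m <= E m.
Proof. by elim: m => // m IH; exact: leq_ltn_trans IH (E_lt m). Qed.

Lemma incr_segment x : E 0 = 0 -> exists m, E m <= x < E m.+1.
Proof.
move=> E0.
have [m xEm minm] := ex_minnP (ex_intro (fun m => x < E m) x.+1 (incr_geq x.+1)).
case: m => [|m] in xEm minm *; first by rewrite E0 in xEm.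
by exists m; rewrite xEm andbT leqNgt; apply/negP => /minm; rewrite ltnn.
Qed.

Lemma incr_segment_uniq m m' x :
  E m <= x < E m.+1 -> E m' <= x < E m'.+1 -> m = m'.
Proof.
move=> /andP [lo hi] /andP [lo' hi'].
by case: (ltngtP m m') => // mm'; have := incr_homo_leq mm'; lia.
Qed.

End Increasing.
End NatFacts.

Lemma cvgey_natP (R : realType) (f : nat -> \bar R) :
  f @ \oo --> +oo <-> forall Y : R, exists N, forall j, (N <= j)%N -> Y%:E <= f j.
Proof.
rewrite cvgeyPge; split => fY Y.
  by have [N _ YN] := fY Y; exists N.
by have [N YN] := fY Y; exists N.
Qed.

Lemma subr1_le_trans (R : realType) (x y : \bar R) (Z : R) :
  x - 1%:E <= y -> Z%:E <= x -> (Z - 1)%:E <= y.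
Proof. by move=> xy Zx; apply: le_trans xy; rewrite EFinB leeB. Qed.

Section SemiCreatingTriple.
Variables (R : realType) (H : nat -> countType) (D : Type).
Local Notation scr := (screature R H D).
Variables (K : set scr) (Sig : set scr -> set scr) (Sb : scr -> set (set scr)).
Hypothesis hK : forall t, K t -> is_semi_creature t.
Hypothesis hSig : semi_composition K Sig.
Hypothesis hSb : semi_decomposition K Sb.

Lemma snor_ooP (t : scr) :
  is_semi_creature t -> snor t = +oo <-> prodH (sdom t) `<=` ssval t.
Proof.
case=> _ _ _ sub [_ <-]; split=> [-> //|full].
by apply/seteqP; split.
Qed.

Lemma sval_nonempty (t : scr) : K t -> exists2 v, ssval t v & pdom v = sdom t.
Proof. by move=> /hK [_ _ [v tv] sub _]; exists v => //; apply: sub. Qed.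

Section Composition.
Variables (S : set scr) (t : scr).
Hypotheses (finS : finite_set S) (SK : S `<=` K) (St : Sig S t).

Lemma Sig_K : K t.
Proof. by case: hSig => SigK _ _ _ _; exact: SigK St. Qed.

Lemma sdom_Sig : sdom t = \bigcup_(s in S) sdom s.
Proof. by case: hSig => _ _ _ _ /(_ S t finS SK St) []. Qed.

Lemma Sig_restr v s : ssval t v -> S s -> ssval s (restr (sdom s) v).
Proof. by case: hSig => _ _ _ _ /(_ S t finS SK St) [_ + _]; apply. Qed.

Lemma Sig1_trans t' : Sig [set t] t' -> Sig S t'.
Proof.
case: hSig => _ SigU _ _ _ tt'.
have := SigU [set t] (fun _ => S) (finite_set1 t).
rewrite bigcup_set1; apply => // [_ ->|_ ->] //; exact: Sig_K.
Qed.

End Composition.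

Lemma Sig1_refl t : K t -> Sig [set t] t.
Proof. by case: hSig => _ _ + _ _; apply. Qed.

Lemma sdom_Sig1 s t : K s -> Sig [set s] t -> sdom t = sdom s.
Proof.
move=> Ks st; rewrite (sdom_Sig (finite_set1 s) _ st) ?bigcup_set1 //.
by move=> _ ->.
Qed.

Lemma Sb_K t S : K t -> Sb t S -> S `<=` K.
Proof. by case: hSb => hdec _ _ _ Kt tS; have [_ /(_ S tS) []] := hdec t Kt. Qed.

Lemma sdom_Sb t S : K t -> Sb t S -> sdom t = \bigcup_(s in S) sdom s.
Proof. by case: hSb => _ _ _ hd Kt tS; have [] := hd t S Kt tS. Qed.

Lemma Sb_sval t S v : K t -> Sb t S -> prodH (sdom t) v ->
  (forall s, S s -> ssval s (restr (sdom s) v)) -> ssval t v.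
Proof. by case: hSb => _ _ _ hd Kt tS; have [_] := hd t S Kt tS; apply. Qed.

Variable pt : forall i, H i.

(* If t had infinite norm, its values would form the full product over dom t,
   whose restrictions to dom m form the full product over dom m. *)
Lemma Sig_snor_fin S t m : finite_set S -> S `<=` K -> Sig S t -> S m ->
  snor m <> +oo -> snor t <> +oo.
Proof.
move=> finS SK St Sm + toot; apply; apply/(snor_ooP (hK (SK m Sm))) => x dx.
have Kt := Sig_K finS SK St.
have mt : sdom m `<=` sdom t by rewrite (sdom_Sig finS SK St) => i mi; exists m.
pose v := pjoin pt x (fun _ => None) (sdom t).
have vt : ssval t v.
  apply: (snor_ooP (hK Kt)).1 => //; apply: pdom_pjoin => [|i []//].
  by rewrite dx.
by have := Sig_restr finS SK St vt Sm; rewrite restr_pjoinl.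
Qed.

(* Fill dom s0 with a value of s0 and dom s1 arbitrarily: if s1 were full this
   would be a value of C, and its restriction to dom m could be anything. *)
Lemma Sb_snor_fin S C m s0 s1 : finite_set S -> S `<=` K -> Sig S C -> S m ->
  Sb C [set s0; s1] -> sdom m `&` sdom s0 = set0 ->
  snor m <> +oo -> snor s1 <> +oo.
Proof.
move=> finS SK SC Sm C01 m0 + s1oo; apply; apply/(snor_ooP (hK (SK m Sm))) => x dx.
have KC := Sig_K finS SK SC.
have [Ks0 Ks1] : K s0 /\ K s1 by split; apply: (Sb_K KC C01); [left|right].
have s1full := (snor_ooP (hK Ks1)).1 s1oo.
have [v0 v0s0 dv0] := sval_nonempty Ks0.
have dC := sdom_Sb KC C01.
have sC s : [set s0; s1] s -> sdom s `<=` sdom C by rewrite dC => ? i si; exists s.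
have mC : sdom m `<=` sdom C by rewrite (sdom_Sig finS SK SC) => i mi; exists m.
pose v := pjoin pt v0 x (sdom C).
have dv : pdom v = sdom C by apply: pdom_pjoin; rewrite ?dv0 ?dx //; apply: sC; left.
have vC : ssval C v.
  apply: (Sb_sval KC C01) => // s [->|->]; first by rewrite restr_pjoinl.
  apply: s1full; rewrite /prodH /= pdom_restr dv; apply/seteqP.
  by split => [i []//|i s1i]; split => //; apply: sC s1i; right.
have v0m : pdom v0 `&` sdom m = set0 by rewrite dv0 setIC.
by have := Sig_restr finS SK SC vC Sm; rewrite (restr_pjoinr _ _ dx v0m).
Qed.

End SemiCreatingTriple.

Section Operations.
Variables (R : realType) (H : nat -> countType) (D : Type).
Local Notation scr := (screature R H D).
Variables (K : set scr) (Sig : set scr -> set scr) (Sb : scr -> set (set scr)).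
Hypothesis hK : forall t, K t -> is_semi_creature t.
Hypothesis hSig : semi_composition K Sig.

Definition glue_spec (m : nat) (ts : nat -> scr) (s : scr) : Prop :=
  Sig [set ts k | k in `I_m.+1] s /\
  \big[Order.min/+oo]_(k < m.+1) snor (ts k) - 1%:E <= snor s.

Definition glue (m : nat) (ts : nat -> scr) : scr :=
  epsilon (inhabits (ts 0%N)) (glue_spec m ts).

Definition glue_on (f : nat -> scr) (a b : nat) : scr :=
  glue (b - a).-1 (fun i => f (a + i)%N).

Definition link_spec (t0 t1 s : scr) : Prop :=
  [/\ Sig [set t0] s, Sig [set t1] s &
      Order.min (snor t0) (snor t1) - 1%:E <= snor s].

Definition link (t0 t1 : scr) : scr := epsilon (inhabits t0) (link_spec t0 t1).

Fixpoint linkn (g : nat -> scr) (k : nat) : scr :=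
  if k is k'.+1 then link (linkn g k') (g k) else g 0%N.

Definition cut_spec (t : scr) (z : set nat) (s : scr * scr) : Prop :=
  [/\ K s.1, K s.2, sdom s.1 = z, sdom s.2 = sdom t `\` z &
      [/\ snor t - 1%:E <= snor s.1, snor t - 1%:E <= snor s.2 &
          Sb t [set s.1; s.2]]].

Definition cut (t : scr) (z : set nat) : scr * scr :=
  epsilon (inhabits (t, t)) (cut_spec t z).

Section GlueOn.
Hypothesis hglue : semi_gluing K Sig.
Variables (f : nat -> scr) (a b : nat).
Hypotheses (fK : forall i, K (f i)) (ab : (a < b)%N).
Hypothesis fdisj : forall i j, i <> j -> sdom (f i) `&` sdom (f j) = set0.

Let glue_on_spec : glue_spec (b - a).-1 (fun i => f (a + i)%N) (glue_on f a b).
Proof.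
apply: epsilon_spec; apply: hglue => // k l _ _ kl.
by apply: fdisj => /addnI.
Qed.

Lemma glue_on_Sig : Sig (f @` [set i | a <= i < b]%N) (glue_on f a b).
Proof. by case: glue_on_spec; rewrite image_itv_shift. Qed.

Let finite_itv := finite_image_itv f a b.

Let itvK : f @` [set i | a <= i < b]%N `<=` K.
Proof. by move=> _ [i _ <-]. Qed.

Lemma glue_on_K : K (glue_on f a b).
Proof. exact: (Sig_K hSig finite_itv itvK glue_on_Sig). Qed.

Lemma sdom_glue_on x :
  sdom (glue_on f a b) x <-> exists2 i, (a <= i < b)%N & sdom (f i) x.
Proof.
rewrite (sdom_Sig hSig finite_itv itvK glue_on_Sig); split.
  by move=> [_ [i ai <-] fx]; exists i.
by move=> [i ai fx]; exists (f i) => //; exists i.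
Qed.

Lemma glue_on_snor_ge (Z : R) : (forall i, (a <= i < b)%N -> Z%:E <= snor (f i)) ->
  (Z - 1)%:E <= snor (glue_on f a b).
Proof.
move=> fZ; case: glue_on_spec => _ /subr1_le_trans; apply.
apply/bigmin_geP; split; first by rewrite leey.
by move=> k _; apply: fZ; have := ltn_ord k; lia.
Qed.

Lemma glue_on_snor_fin (pt : forall i, H i) i : (a <= i < b)%N ->
  snor (f i) <> +oo -> snor (glue_on f a b) <> +oo.
Proof.
by move=> ai; apply: (Sig_snor_fin hK hSig pt finite_itv itvK glue_on_Sig); exists i.
Qed.

End GlueOn.

Section Linking.
Hypothesis hlink : linked K Sig.
Variables (n : nat) (g : nat -> scr) (A : set nat) (Z : R).
Hypothesis hg : forall k, (k <= n)%N ->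
  [/\ K (g k), sdom (g k) = A & Z%:E <= snor (g k)].
Hypothesis Zn : (1 < Z - n%:R)%R.

(* Each link costs 1 in norm, so the norms stay above 1 along the chain. *)
Lemma linknP k : (k <= n)%N ->
  [/\ K (linkn g k), sdom (linkn g k) = A, (Z - k%:R)%:E <= snor (linkn g k) &
      forall i, (i <= k)%N -> Sig [set g i] (linkn g k)].
Proof.
elim: k => [|k IH] kn /=.
  have [K0 d0 Z0] := hg kn; rewrite subr0; split => // i.
  by rewrite leqn0 => /eqP ->; exact: (Sig1_refl hSig K0).
have [Kc dc Zc Sc] := IH (ltnW kn).
have [K1 d1 Z1] := hg kn.
have Zk : (1 < Z - k%:R)%R.
  by apply: lt_le_trans Zn _; rewrite lerB // ler_nat ltnW.
have Z1k : (Z - k%:R)%:E <= snor (g k.+1).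
  by apply: le_trans Z1; rewrite lee_fin lerBlDr lerDl.
have [s0 s1 sn] : link_spec (linkn g k) (g k.+1) (linkn g k.+1).
  apply: epsilon_spec; apply: hlink => //; last by rewrite dc d1.
    by apply: lt_le_trans Zc; rewrite lte_fin.
  by apply: lt_le_trans Z1k; rewrite lte_fin.
have finK s : K s -> finite_set [set s] /\ [set s] `<=` K.
  by split; [exact: finite_set1 | move=> _ ->].
split.
- by have [fs sK] := finK _ K1; exact: (Sig_K hSig fs sK s1).
- by rewrite (sdom_Sig1 hSig K1 s1).
- apply: le_trans (sn); rewrite -natr1 opprD addrA EFinB leeB // le_min.
  by rewrite Zc Z1k.
- move=> i; rewrite leq_eqVlt => /orP [/eqP -> //|ik].
  have [Ki _ _] := hg (ltnW (leq_trans ik kn)).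
  by have [fs sK] := finK _ Ki; exact: (Sig1_trans hSig fs sK (Sc i ik) s0).
Qed.

End Linking.

Lemma cutP (hcut : cutting_property K Sb) t z :
  K t -> 1%:E < snor t -> z !=set0 -> z `<` sdom t -> cut_spec t z (cut t z).
Proof.
move=> Kt t1 z0 zt; apply: epsilon_spec.
by have [s0 [s1 ?]] := hcut t z Kt t1 z0 zt; exists (s0, s1).
Qed.

End Operations.

Section Decide.
Variables (R : realType) (H : nat -> countType) (D : Type).
Local Notation scr := (screature R H D).
Variable K : set scr.
Hypothesis hK : forall t, K t -> is_semi_creature t.

Definition sval_pick (t : scr) : pval H :=
  epsilon (inhabits (fun _ => None)) (ssval t).

Definition owner (p : cond R H D) (j : nat) : nat :=
  xget 0%N [set i | sdom (ct p i) j].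

Definition decide_first (p : cond R H D) (N : nat) : cond R H D :=
  Cond (fun j => if cw p j is Some a then Some a else
                 if (owner p j < N)%N then sval_pick (ct p (owner p j)) j else None)
       (fun m => ct p (m + N)%N).

Lemma sval_pickP t : K t -> ssval t (sval_pick t) /\ pdom (sval_pick t) = sdom t.
Proof.
move=> Kt; have [v tv _] := sval_nonempty hK Kt.
have tw : ssval t (sval_pick t) by apply: epsilon_spec; exists v.
by split => //; have [_ _ _ /(_ _ tw) + _] := hK Kt.
Qed.

Variables (p : cond R H D) (N : nat).
Hypothesis cp : is_cond K p.

Let Kp i : K (ct p i). Proof. by case: cp. Qed.

Lemma owner_eq i j : sdom (ct p i) j -> owner p j = i.
Proof.
case: cp => _ _ disj _ _ tij; apply: contrapT => ne.
have ownj : sdom (ct p (owner p j)) j.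
  by apply: (@xgetPex _ 0%N [set i | sdom (ct p i) j]); exists i.
by have /seteqP [/(_ j) + _] := disj _ _ ne; apply.
Qed.

Lemma stem_notin_sdom i j : sdom (ct p i) j -> cw p j = None.
Proof.
case: cp => _ _ _ wdisj _ tij; case e: (cw p j) => [a|] //.
have : (pdom (cw p) `&` sdom (ct p i)) j by split => //; rewrite /pdom /= e.
by rewrite wdisj.
Qed.

Lemma sval_pick_sdom i j : sval_pick (ct p i) j <> None <-> sdom (ct p i) j.
Proof. by have [_ <-] := sval_pickP (Kp i). Qed.

Lemma pdom_decide_first : pdom (cw (decide_first p N)) =
  pdom (cw p) `|` \bigcup_(i in [set i | i < N]%N) sdom (ct p i).
Proof.
apply/seteqP; split => j; rewrite /pdom /=.
  case e: (cw p j) => [a|]; first by left.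
  by case: ifP => // jN /sval_pick_sdom tj; right; exists (owner p j).
case; first by case: (cw p j).
move=> [i /= iN tij]; rewrite (stem_notin_sdom tij) (owner_eq tij) iN.
exact/sval_pick_sdom.
Qed.

Lemma restr_decide_first i : (i < N)%N ->
  restr (sdom (ct p i)) (cw (decide_first p N)) = sval_pick (ct p i).
Proof.
move=> iN; apply: pval_ext => j; rewrite /restr; case: asboolP => tij /=.
  by rewrite (stem_notin_sdom tij) (owner_eq tij) iN.
by case e: (sval_pick _ j) => [a|] //; case: tij; apply/sval_pick_sdom; rewrite e.
Qed.

Lemma is_cond_decide_first : is_cond K (decide_first p N).
Proof.
case: cp => fw _ disj _ [cover nfin lim]; split => /=.
- rewrite pdom_decide_first finite_setU; split => //; apply: bigcup_finite.
    exact: (@ub_finite_set _ N).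
  by move=> i _; have [] := hK (Kp i).
- by [].
- by move=> i j ij; apply: disj => /addIn.
- move=> m; apply/seteqP; split => // j [] /=.
  rewrite /pdom /= => + tj; rewrite (stem_notin_sdom tj) (owner_eq tj).
  by rewrite ltnNge leq_addl.
- split => //; last by rewrite (cvg_shiftn N (fun i => snor (ct p i))).
  move=> j; have [wj|[i tij]] := cover j.
    by left; rewrite pdom_decide_first; left.
  have [iN|Ni] := ltnP i N; first by left; rewrite pdom_decide_first; right; exists i.
  by right; exists (i - N)%N; rewrite subnK.
Qed.

Lemma decide_step_first : decide_step p (decide_first p N).
Proof.
exists [set i | i < N]%N; split; first exact: (@ub_finite_set _ N).
split => //=.
- by move=> j; rewrite /pdom /=; case: (cw p j).
- exact: pdom_decide_first.
- by move=> i iN; rewrite restr_decide_first //; case: (sval_pickP (Kp i)).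
exists (addn^~ N); split => //; first by move=> a b; rewrite ltn_add2r.
apply/seteqP; split => i; first by move=> [m _ <-] /=; rewrite ltnNge leq_addl.
by move=> /negP; rewrite -leqNgt => Ni; exists (i - N)%N; rewrite ?subnK.
Qed.

End Decide.

Lemma decide_snor_gt (R : realType) (H : nat -> countType) (D : Type)
    (K : set (screature R H D)) Sig Sb (M : R) (p : cond R H D) :
  (forall t, K t -> is_semi_creature t) -> is_cond K p ->
  exists2 p', Qle K Sig Sb p p' /\ is_cond K p' & forall i, M%:E < snor (ct p' i).
Proof.
move=> hK cp; have [_ _ _ _ [_ _ /cvgey_natP lim]] := cp.
have [N NM] := lim (M + 1)%R.
have cq := is_cond_decide_first hK N cp.
exists (decide_first p N).
  by split => //; apply: rt_step; split => //; left; exact: (decide_step_first hK N cp).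
move=> i /=; apply: lt_le_trans (NM _ (leq_addl _ _)).
by rewrite lte_fin ltrDl.
Qed.

Section StemCode.
Variable H : nat -> countType.

Definition pval_bound (u : pval H) : nat :=
  xget 0%N [set m | forall i, (m <= i)%N -> u i = None].

Definition pval_code (u : pval H) : nat :=
  pickle [seq pickle (u i) | i <- iota 0 (pval_bound u)].

Lemma pval_boundP u : finite_set (pdom u) ->
  forall i, (pval_bound u <= i)%N -> u i = None.
Proof.
move=> /finite_set_ub [B uB].
suff ex : exists m, [set m | forall i, (m <= i)%N -> u i = None] m.
  exact: (xgetPex 0%N ex).
exists B => i Bi /=; case e: (u i) => [a|] //.
have /uB : pdom u i by rewrite /pdom /= e.
by rewrite ltnNge Bi.
Qed.

Lemma pval_code_inj u u' : finite_set (pdom u) -> finite_set (pdom u') ->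
  pval_code u = pval_code u' -> u = u'.
Proof.
move=> fu fu' /(pcan_inj pickleK) uu'.
have /eqP := congr1 size uu'; rewrite !size_map !size_iota => /eqP bnd.
apply: pval_ext => i; have [ib|] := ltnP i (pval_bound u); last first.
  by move=> bi; rewrite !pval_boundP // -bnd.
have := congr1 (nth 0%N ^~ i) uu'.
rewrite !(nth_map 0%N) ?size_iota -?bnd // !nth_iota -?bnd //.
exact: (pcan_inj pickleK).
Qed.

End StemCode.

Lemma code_sigma_star_linked (T : Type) (Q : set T) (le : T -> T -> Prop) :
  (forall n, exists code : T -> nat, forall q : nat -> T,
     (forall k, (k <= n)%N -> Q (q k) /\ code (q k) = code (q 0%N)) ->
     exists r, Q r /\ forall k, (k <= n)%N -> le (q k) r) ->
  sigma_star_linked Q le.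
Proof.
move=> linked n; have [code qr] := linked n.
exists (fun i => [set q | Q q /\ code q = i]); split.
- by move=> i q [].
- by apply/seteqP; split => [q [i _ []]//|q Qq]; exists (code q).
- move=> i j ij; apply/seteqP; split => // q [[_ qi] [_ qj]].
  by apply: ij; rewrite -qi -qj.
- move=> i q qi; apply: qr => k kn; have [Qk ->] := qi k kn.
  by have [_ ->] := qi 0%N (leq0n n).
Qed.

Unset Implicit Arguments.

Section Amalgamation.
Variables (R : realType) (H : nat -> countType) (D : Type).
Local Notation scr := (screature R H D).
Variables (K : set scr) (Sig : set scr -> set scr) (Sb : scr -> set (set scr)).
Variable pt : forall i, H i.
Hypotheses (hK : forall t, K t -> is_semi_creature t)
  (hSig : semi_composition K Sig) (hSb : semi_decomposition K Sb).
Hypotheses (hlink : linked K Sig) (hglue : semi_gluing K Sig)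
  (hcut : cutting_property K Sb).
Variables (n : nat) (u : pval H) (p : nat -> cond R H D) (M : R).
Hypothesis hp : forall k, (k <= n)%N -> is_cond K (p k).
Hypothesis hu : forall k, (k <= n)%N -> cw (p k) = u.
Hypothesis hM : (n%:R + 4 < M)%R.
Hypothesis hnor : forall k i, (k <= n)%N -> M%:E < snor (ct (p k) i).

Local Notation t k i := (ct (p k) i).
Local Open Scope nat_scope.

Lemma M_gt4 : (4 < M)%R.
Proof. by apply: le_lt_trans hM; rewrite lerDr. Qed.

Lemma t_K k i : k <= n -> K (t k i).
Proof. by move=> /(hp k) []. Qed.

Lemma t_disj k : k <= n -> forall i j, i <> j -> sdom (t k i) `&` sdom (t k j) = set0.
Proof. by move=> /(hp k) []. Qed.

Lemma t_disj_at k i i' x : k <= n -> sdom (t k i) x -> sdom (t k i') x -> i = i'.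
Proof.
move=> kn ti ti'; apply: contrapT => ii'.
by have /seteqP [/(_ x) + _] := t_disj k kn i i' ii'; apply.
Qed.

Lemma t_sdom_neq0 k i : k <= n -> exists x, sdom (t k i) x.
Proof. by move=> /(t_K k i) /hK [_ [x ?] _ _ _]; exists x. Qed.

Lemma t_snor_fin k i : k <= n -> snor (t k i) <> +oo.
Proof. by move=> /(hp k) [_ _ _ _ []]. Qed.

Lemma t_snor_ge_M k i : k <= n -> (M%:E <= snor (t k i))%E.
Proof. by move=> kn; apply/ltW/hnor. Qed.

Lemma notin_stemP k x : k <= n -> ~ pdom u x <-> exists i, sdom (t k i) x.
Proof.
move=> kn; have [_ _ _ wt [cover _ _]] := hp k kn; rewrite -(hu k kn); split.
  by move=> wx; case: (cover x).
move=> [i ti] wx; have : (pdom (cw (p k)) `&` sdom (t k i)) x by [].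
by rewrite wt.
Qed.

Lemma t_snor_ge (Z : R) : exists I, forall k, k <= n -> forall l, I <= l ->
  (Z%:E <= snor (t k l))%E.
Proof.
apply: (ex_forall_le_upclosed
  (P := fun k I => forall l, I <= l -> (Z%:E <= snor (t k l))%E)).
  by move=> k I J IJ ZI l Jl; apply/ZI/(leq_trans IJ).
by move=> k /(hp k) [_ _ _ _ [_ _ /cvgey_natP]]; apply.
Qed.

Lemma ex_dom_bound a : exists E, forall k i x,
  k <= n -> i <= a -> sdom (t k i) x -> x < E.
Proof.
have [E EP] : exists E, forall k, k <= n ->
    forall i x, i <= a -> sdom (t k i) x -> x < E.
  apply: (ex_forall_le_upclosed
    (P := fun k E => forall i x, i <= a -> sdom (t k i) x -> x < E)).
    by move=> k E E' EE' EP i x ia tx; exact: leq_trans (EP i x ia tx) EE'.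
  move=> k kn; have : finite_set (\bigcup_(i in [set i | i <= a]) sdom (t k i)).
    apply: bigcup_finite => [|i _]; first exact: (@ub_finite_set _ a.+1).
    by have [] := hK _ (t_K k i kn).
  by move=> /finite_set_ub [E EP]; exists E => i x ia tx; apply: EP; exists i.
by exists E => k i x kn; exact: EP k kn i x.
Qed.

(* Only finitely many creatures of p k meet [0, E), as their domains are disjoint. *)
Lemma ex_index_bound E : exists I, forall k i x,
  k <= n -> I <= i -> sdom (t k i) x -> E <= x.
Proof.
have [I IP] : exists I, forall k, k <= n ->
    forall i x, I <= i -> sdom (t k i) x -> E <= x.
  apply: (ex_forall_le_upclosed
    (P := fun k I => forall i x, I <= i -> sdom (t k i) x -> E <= x)).
    by move=> k I J IJ IP i x Ji; apply/IP/(leq_trans IJ).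
  move=> k kn; elim: E => [|E [I IP]]; first by exists 0.
  have [[i0 ti0]|nE] := pselect (exists i0, sdom (t k i0) E); last first.
    exists I => i x Ii tx; rewrite ltn_neqAle (IP i x Ii tx) andbT.
    by apply/eqP => Ex; apply: nE; exists i; rewrite Ex.
  exists (maxn I i0.+1) => i x; rewrite geq_max => /andP [Ii i0i] tx.
  rewrite ltn_neqAle (IP i x Ii tx) andbT; apply/eqP => Ex.
  by move: i0i; rewrite (t_disj_at k i0 i E kn ti0) ?ltnn // Ex.
by exists I => k i x kn; exact: IP k kn i x.
Qed.

Definition dom_bound (a : nat) : nat := xget 0 [set E | forall k i x,
  k <= n -> i <= a -> sdom (t k i) x -> x < E].

Definition index_bound (E : nat) : nat := xget 0 [set I | forall k i x,
  k <= n -> I <= i -> sdom (t k i) x -> E <= x].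

Lemma dom_boundP a k i x : k <= n -> i <= a -> sdom (t k i) x -> x < dom_bound a.
Proof. by move: k i x; exact: (xgetPex 0 (ex_dom_bound a)). Qed.

Lemma index_boundP E k i x : k <= n -> index_bound E <= i -> sdom (t k i) x -> E <= x.
Proof. by move: k i x; exact: (xgetPex 0 (ex_index_bound E)). Qed.

Fixpoint block_start (j : nat) : nat :=
  if j is j'.+1 then
    (maxn (index_bound (dom_bound (block_start j'))) (block_start j')).+1
  else 0.

Definition boundary (j : nat) : nat :=
  if j is j'.+1 then dom_bound (block_start j') else 0.

Local Notation a := block_start.
Local Notation b := boundary.

Lemma block_start_lt j : a j < a j.+1.
Proof. by rewrite /= ltnS leq_maxr. Qed.

Lemma sdom_lt_boundary k j i x : k <= n -> i <= a j -> sdom (t k i) x -> x < b j.+1.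
Proof. exact: dom_boundP. Qed.

Lemma boundary_le_sdom k j i x : k <= n -> a j <= i.+1 -> sdom (t k i) x -> b j <= x.
Proof.
case: j => [//|j] kn + tx; rewrite /= ltnS geq_max => /andP [ji _].
exact: (index_boundP _ k i x kn ji tx).
Qed.

Lemma boundary_lt j : b j < b j.+1.
Proof.
have [x tx] := t_sdom_neq0 0 (a j) (leq0n n).
have := boundary_le_sdom 0 j (a j) x (leq0n n) (leqnSn _) tx.
move/leq_ltn_trans; apply.
exact: (sdom_lt_boundary 0 j (a j) x (leq0n n) (leqnn _) tx).
Qed.

Definition block k j := glue_on Sig (ct (p k)) (a j) (a j.+1).

Section Block.
Variables (k j : nat).
Hypothesis kn : k <= n.

Let tK := t_K k ^~ kn.
Let tdisj := t_disj k kn.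
Let a_lt := block_start_lt j.

Lemma block_Sig : Sig (ct (p k) @` [set i | a j <= i < a j.+1]) (block k j).
Proof. exact: (glue_on_Sig hglue tK a_lt tdisj). Qed.

Lemma block_K : K (block k j).
Proof. exact: (glue_on_K hSig hglue tK a_lt tdisj). Qed.

Lemma sdom_block x :
  sdom (block k j) x <-> exists2 i, a j <= i < a j.+1 & sdom (t k i) x.
Proof. exact: (sdom_glue_on hSig hglue tK a_lt tdisj). Qed.

Lemma block_snor_ge (Z : R) : (forall l, a j <= l -> (Z%:E <= snor (t k l))%E) ->
  ((Z - 1)%:E <= snor (block k j))%E.
Proof.
move=> Zt; apply: (glue_on_snor_ge hglue tK a_lt tdisj).
by move=> l /andP [] /Zt.
Qed.

Lemma block_snor_fin : snor (block k j) <> +oo.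
Proof.
have ajj : a j <= a j < a j.+1 by rewrite leqnn block_start_lt.
exact: (glue_on_snor_fin hK hSig hglue tK a_lt tdisj pt ajj (t_snor_fin k (a j) kn)).
Qed.

Lemma sdom_block_stem x : sdom (block k j) x -> ~ pdom u x.
Proof. by move=> /sdom_block [i _ ti]; apply/(notin_stemP k x kn); exists i. Qed.

Lemma sdom_block_boundary x : sdom (block k j) x -> b j <= x < b j.+2.
Proof.
move=> /sdom_block [i /andP [ji ij] tx]; apply/andP; split.
  exact: (boundary_le_sdom k j i x kn (leqW ji) tx).
exact: (sdom_lt_boundary k j.+1 i x kn (ltnW ij) tx).
Qed.

Lemma sdom_block_first x : sdom (t k (a j)) x -> sdom (block k j) x /\ x < b j.+1.
Proof.
move=> tx; split; last exact: (sdom_lt_boundary k j _ x kn (leqnn _) tx).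
by apply/sdom_block; exists (a j); rewrite ?leqnn ?block_start_lt.
Qed.

Lemma sdom_block_last x :
  sdom (t k (a j.+1).-1) x -> sdom (block k j) x /\ b j.+1 <= x.
Proof.
have := block_start_lt j => aj tx; split.
  by apply/sdom_block; exists (a j.+1).-1 => //; lia.
by apply: (boundary_le_sdom k j.+1 _ x kn _ tx); lia.
Qed.

End Block.

Lemma block_disj k j j' : k <= n -> j <> j' ->
  sdom (block k j) `&` sdom (block k j') = set0.
Proof.
move=> kn jj'; apply/seteqP; split => // x [].
move=> /(sdom_block k j kn) [i ij ti] /(sdom_block k j' kn) [i' ij' ti'].
move: ij'; rewrite -(t_disj_at k i i' x kn ti ti') => ij'.
by apply: jj'; apply: (incr_segment_uniq block_start_lt ij ij').
Qed.

Definition halves k j :=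
  cut K Sb (block k j) (sdom (block k j) `&` [set x | x < b j.+1]).
Definition lower k j := (halves k j).1.
Definition upper k j := (halves k j).2.

Section Halves.
Variables (k j : nat).
Hypothesis kn : k <= n.

(* The first creature of the block lies below b j.+1 and the last one above it,
   so the cut is proper. *)
Lemma halvesP :
  cut_spec K Sb (block k j) (sdom (block k j) `&` [set x | x < b j.+1]) (halves k j).
Proof.
apply: (cutP hcut); first exact: block_K.
- apply: (lt_le_trans _ (block_snor_ge k j kn M (fun l _ => t_snor_ge_M k l kn))).
  by rewrite lte_fin; have := M_gt4; lra.
- by have [x /(sdom_block_first k j kn)] := t_sdom_neq0 k (a j) kn; exists x.
split=> [x [] //|sub]; have [x tx] := t_sdom_neq0 k (a j.+1).-1 kn.
have [/sub [_ /= xb] bx] := sdom_block_last k j kn x tx.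
by move: xb; rewrite ltnNge bx.
Qed.

Lemma lower_K : K (lower k j). Proof. by case: halvesP. Qed.
Lemma upper_K : K (upper k j). Proof. by case: halvesP. Qed.

Lemma Sb_halves : Sb (block k j) [set lower k j; upper k j].
Proof. by case: halvesP => _ _ _ _ []. Qed.

Lemma sdom_lower x : sdom (lower k j) x <-> sdom (block k j) x /\ x < b j.+1.
Proof. by case: halvesP => _ _ -> _ _. Qed.

Lemma sdom_upper x : sdom (upper k j) x <-> sdom (block k j) x /\ b j.+1 <= x.
Proof.
case: halvesP => _ _ _ -> _; split => -[bx xb]; split => //.
  by rewrite leqNgt; apply/negP => xlt; apply: xb.
by move=> [_] /=; rewrite ltnNge xb.
Qed.

Lemma halves_snor_ge (Z : R) : (forall l, a j <= l -> (Z%:E <= snor (t k l))%E) ->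
  ((Z - 1 - 1)%:E <= snor (lower k j) /\ (Z - 1 - 1)%:E <= snor (upper k j))%E.
Proof.
move=> /(block_snor_ge k j kn) Zb; case: halvesP => _ _ _ _ [bl bu _].
by split; apply: subr1_le_trans Zb.
Qed.

Let halves_snor_fin i s0 s1 : a j <= i < a j.+1 ->
  Sb (block k j) [set s0; s1] -> sdom (t k i) `&` sdom s0 = set0 ->
  snor s1 <> +oo.
Proof.
move=> ij C01 ts0; have SK : ct (p k) @` [set i | a j <= i < a j.+1] `<=` K.
  by move=> _ [l _ <-]; exact: t_K.
exact: (Sb_snor_fin hK hSig hSb pt (finite_image_itv _ _ _) SK (block_Sig k j kn)
  (ex_intro2 _ _ i ij erefl) C01 ts0 (t_snor_fin k i kn)).
Qed.

Lemma lower_snor_fin : snor (lower k j) <> +oo.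
Proof.
have := block_start_lt j => aj.
apply: (halves_snor_fin (a j)); first by rewrite leqnn.
  by rewrite setUC; exact: Sb_halves.
apply/seteqP; split => // x [/(sdom_block_first k j kn) [_ xb] /sdom_upper [_ bx]].
by move: xb; rewrite ltnNge bx.
Qed.

Lemma upper_snor_fin : snor (upper k j) <> +oo.
Proof.
have := block_start_lt j => aj.
apply: (halves_snor_fin (a j.+1).-1); [lia | exact: Sb_halves |].
apply/seteqP; split => // x [/(sdom_block_last k j kn) [_ bx] /sdom_lower [_ xb]].
by move: xb; rewrite ltnNge bx.
Qed.

End Halves.

Definition piece k i := if odd i then upper k i./2 else lower k i./2.

Lemma piece_double k j : piece k j.*2 = lower k j.
Proof. by rewrite /piece odd_double doubleK. Qed.

Lemma piece_doubleS k j : piece k j.*2.+1 = upper k j.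
Proof. by rewrite /piece /= odd_double /= uphalf_double. Qed.

Section Pieces.
Variable k : nat.
Hypothesis kn : k <= n.

Lemma piece_K i : K (piece k i).
Proof. by rewrite /piece; case: ifP => _; [exact: upper_K | exact: lower_K]. Qed.

Lemma piece_snor_fin i : snor (piece k i) <> +oo.
Proof.
by rewrite /piece; case: ifP => _; [exact: upper_snor_fin | exact: lower_snor_fin].
Qed.

Lemma sdom_piece_block i x : sdom (piece k i) x -> sdom (block k i./2) x.
Proof.
rewrite /piece; case: ifP => _; first by move=> /(sdom_upper _ _ kn) [].
by move=> /(sdom_lower _ _ kn) [].
Qed.

Lemma piece_disj i i' : i <> i' -> sdom (piece k i) `&` sdom (piece k i') = set0.
Proof.
move=> ii'; apply/seteqP; split => // x [xi xi'].
have [i2|i2] := eqVneq i./2 i'./2; last first.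
  have /seteqP [/(_ x) + _] := block_disj k _ _ kn (elimN eqP i2); apply.
  by split; apply: sdom_piece_block.
have oi : odd i != odd i'.
  apply: contra_notN ii' => /eqP oi.
  by rewrite -[i]odd_double_half oi i2 odd_double_half.
move: xi xi' oi; rewrite /piece -i2; case: (odd i); case: (odd i') => //.
  by move=> /(sdom_upper _ _ kn) [_ bx] /(sdom_lower _ _ kn) [_]; rewrite ltnNge bx.
by move=> /(sdom_lower _ _ kn) [_ xb] /(sdom_upper _ _ kn) [_]; rewrite leqNgt xb.
Qed.

Lemma piece_snor_ge (Z : R) i : (forall l, a i./2 <= l -> (Z%:E <= snor (t k l))%E) ->
  ((Z - 1 - 1)%:E <= snor (piece k i))%E.
Proof.
by move=> /(halves_snor_ge k i./2 kn) [Zl Zu]; rewrite /piece; case: ifP.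
Qed.

End Pieces.

(* For m = 0 the index range is {0}, since 0.-1 = 0. *)
Definition merged k m := glue_on Sig (piece k) (m.*2).-1 m.*2.+1.

Section Merged.
Variables (k m : nat).
Hypothesis kn : k <= n.

Let itv : (m.*2).-1 < m.*2.+1. Proof. by lia. Qed.
Let pK := piece_K k kn.
Let pdisj := piece_disj k kn.

Lemma merged_Sig : Sig (piece k @` [set i | (m.*2).-1 <= i < m.*2.+1]) (merged k m).
Proof. exact: (glue_on_Sig hglue pK itv pdisj). Qed.

Lemma merged_K : K (merged k m).
Proof. exact: (glue_on_K hSig hglue pK itv pdisj). Qed.

Lemma merged_snor_fin : snor (merged k m) <> +oo.
Proof.
have mi : (m.*2).-1 <= m.*2 < m.*2.+1 by lia.
exact: (glue_on_snor_fin hK hSig hglue pK itv pdisj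
  pt mi (piece_snor_fin k kn _)).
Qed.

Lemma merged_snor_ge (Z : R) : (forall l, a m.-1 <= l -> (Z%:E <= snor (t k l))%E) ->
  ((Z - 3)%:E <= snor (merged k m))%E.
Proof.
move=> Zt; have -> : (Z - 3 = Z - 1 - 1 - 1)%R by lra.
apply: (glue_on_snor_ge hglue pK itv pdisj) => i mi.
apply: (piece_snor_ge k kn) => l il; apply: Zt; apply: leq_trans il.
by apply: (incr_homo_leq block_start_lt); lia.
Qed.

Lemma sdom_merged x : sdom (merged k m) x <-> ~ pdom u x /\ b m <= x < b m.+1.
Proof.
rewrite (sdom_glue_on hSig hglue pK itv pdisj); split.
  move=> [i /double_pred_segment [->|[j -> ->]]].
    rewrite piece_double => /(sdom_lower _ _ kn) [xb xlt].
    split; first exact: (sdom_block_stem _ _ kn _ xb).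
    by rewrite xlt andbT; case/andP: (sdom_block_boundary _ _ kn _ xb).
  rewrite piece_doubleS => /(sdom_upper _ _ kn) [xb xge].
  split; first exact: (sdom_block_stem _ _ kn _ xb).
  by rewrite xge; case/andP: (sdom_block_boundary _ _ kn _ xb).
move=> [ux bx]; have [l tl] := (notin_stemP k x kn).1 ux.
have [j lj] := incr_segment block_start_lt l (erefl 0).
have xb : sdom (block k j) x by apply/(sdom_block _ _ kn); exists l.
have /andP [bjx xbj] := sdom_block_boundary k j kn x xb.
have [xlt|xge] := ltnP x (b j.+1).
  have mj : m = j by apply: (incr_segment_uniq boundary_lt bx); rewrite bjx xlt.
  by exists j.*2; [lia | rewrite piece_double; apply/(sdom_lower _ _ kn)].
have mj : m = j.+1 by apply: (incr_segment_uniq boundary_lt bx); rewrite xge xbj.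
by exists j.*2.+1; [lia | rewrite piece_doubleS; apply/(sdom_upper _ _ kn)].
Qed.

End Merged.

Definition amalgam m := linkn Sig (fun k => merged k m) n.

Lemma amalgamP m (Z : R) :
  (forall k, k <= n -> forall l, a m.-1 <= l -> (Z%:E <= snor (t k l))%E) ->
  (1 < Z - 3 - n%:R)%R ->
  [/\ K (amalgam m), sdom (amalgam m) = [set x | ~ pdom u x /\ b m <= x < b m.+1],
      ((Z - 3 - n%:R)%:E <= snor (amalgam m))%E &
      forall k, k <= n -> Sig [set merged k m] (amalgam m)].
Proof.
move=> Zt Zn.
have hg k : k <= n -> [/\ K (merged k m),
    sdom (merged k m) = [set x | ~ pdom u x /\ b m <= x < b m.+1] &
    ((Z - 3)%:E <= snor (merged k m))%E].
  move=> kn; split; first exact: merged_K.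
    by apply/seteqP; split => x /(sdom_merged k m kn x).
  exact: (merged_snor_ge k m kn Z (Zt k kn)).
exact: (linknP hSig hlink hg Zn (leqnn n)).
Qed.

Lemma amalgam_spec m :
  [/\ K (amalgam m), sdom (amalgam m) = [set x | ~ pdom u x /\ b m <= x < b m.+1] &
      forall k, k <= n -> Sig [set merged k m] (amalgam m)].
Proof.
have M3 : (1 < M - 3 - n%:R)%R by move: hM; lra.
by have [] := amalgamP m M (fun k kn l _ => t_snor_ge_M k l kn) M3.
Qed.

Lemma amalgam_snor_fin m : snor (amalgam m) <> +oo.
Proof.
have [_ _ Sm] := amalgam_spec m.
have mK : [set merged 0 m] `<=` K by move=> _ ->; exact: merged_K.
exact: (Sig_snor_fin hK hSig pt (finite_set1 _) mK (Sm 0 (leq0n n)) erefl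
  (merged_snor_fin 0 m (leq0n n))).
Qed.

Lemma is_cond_stem (c : nat -> scr) : (forall i, K (c i)) ->
  (forall i j, i <> j -> sdom (c i) `&` sdom (c j) = set0) ->
  (forall i x, sdom (c i) x -> ~ pdom u x) ->
  (forall x, ~ pdom u x -> exists i, sdom (c i) x) ->
  (forall i, snor (c i) <> +oo) ->
  (forall Y : R, exists N, forall i, N <= i -> (Y%:E <= snor (c i))%E) ->
  is_cond K (Cond u c).
Proof.
move=> cK cdisj cstem ccover cfin /cvgey_natP clim.
have [fw _ _ _ _] := hp 0 (leq0n n); rewrite (hu 0 (leq0n n)) in fw.
split => //= [i|].
  by apply/seteqP; split => // x [ux /cstem].
split => // x; have [ux|nux] := pselect (pdom u x); [left | right]; auto.
Qed.

Lemma is_cond_blocks k : k <= n -> is_cond K (Cond u (block k)).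
Proof.
move=> kn; apply: is_cond_stem.
- by move=> j; exact: block_K.
- by move=> j j'; exact: block_disj.
- by move=> j x; exact: sdom_block_stem.
- move=> x /(notin_stemP k x kn) [l tl].
  have [j lj] := incr_segment block_start_lt l (erefl 0).
  by exists j; apply/(sdom_block _ _ kn); exists l.
- by move=> j; exact: block_snor_fin.
- move=> Y; have [I tY] := t_snor_ge (Y + 1).
  exists I => j Ij; rewrite -[Y](addrK 1%R); apply: (block_snor_ge k j kn) => l jl.
  apply: (tY k kn); apply: leq_trans jl.
  exact: leq_trans Ij (incr_geq block_start_lt j).
Qed.

Lemma is_cond_pieces k : k <= n -> is_cond K (Cond u (piece k)).
Proof.
move=> kn; apply: is_cond_stem.
- exact: piece_K.
- exact: piece_disj.
- by move=> i x /(sdom_piece_block k kn) /(sdom_block_stem _ _ kn).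
- move=> x /(notin_stemP k x kn) [l tl].
  have [j lj] := incr_segment block_start_lt l (erefl 0).
  have xb : sdom (block k j) x by apply/(sdom_block _ _ kn); exists l.
  have [xlt|xge] := ltnP x (b j.+1).
    by exists j.*2; rewrite piece_double; apply/(sdom_lower _ _ kn).
  by exists j.*2.+1; rewrite piece_doubleS; apply/(sdom_upper _ _ kn).
- exact: piece_snor_fin.
- move=> Y; have [I tY] := t_snor_ge (Y + 1 + 1).
  exists I.*2 => i Ii; rewrite -[Y](addrK 1%R) -[(Y + 1)%R](addrK 1%R).
  apply: (piece_snor_ge k kn) => l il; apply: (tY k kn); apply: leq_trans il.
  by apply: leq_trans (incr_geq block_start_lt _); rewrite -leq_double; lia.
Qed.

Lemma is_cond_amalgam : is_cond K (Cond u amalgam).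
Proof.
have sdomA m x : sdom (amalgam m) x <-> ~ pdom u x /\ b m <= x < b m.+1.
  by have [_ -> _] := amalgam_spec m.
apply: is_cond_stem.
- by move=> m; case: (amalgam_spec m).
- move=> m m' mm'; apply/seteqP; split => // x [/sdomA [_ xm] /sdomA [_ xm']].
  exact/mm'/(incr_segment_uniq boundary_lt xm xm').
- by move=> m x /sdomA [].
- move=> x ux; have [m xm] := incr_segment boundary_lt x (erefl 0).
  by exists m; apply/sdomA.
- exact: amalgam_snor_fin.
- move=> Y; pose Z := Num.max M (Y + 3 + n%:R)%R.
  have MZ : (M <= Z)%R by rewrite le_max lexx.
  have YZ : (Y + 3 + n%:R <= Z)%R by rewrite le_max lexx orbT.
  have Zn : (1 < Z - 3 - n%:R)%R by move: hM; lra.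
  have [I tZ] := t_snor_ge Z; exists I.+1 => m Im.
  have Zt k (kn : k <= n) l (ml : a m.-1 <= l) : (Z%:E <= snor (t k l))%E.
    apply: (tZ k kn); apply: leq_trans ml.
    by apply: leq_trans (incr_geq block_start_lt _); lia.
  have [_ _ + _] := amalgamP m Z Zt Zn; apply: le_trans.
  by rewrite lee_fin; lra.
Qed.

Lemma glue_blocks_step k : k <= n -> one_op K Sig Sb (p k) (Cond u (block k)).
Proof.
move=> kn; split; [exact: hp | exact: is_cond_blocks | right; left].
split; first by rewrite /= (hu k kn).
exists (fun j => [set i | a j <= i < a j.+1]); split.
- by move=> j; apply: (@ub_finite_set _ (a j.+1)) => i /andP [].
- move=> j j' jj'; apply/seteqP; split => // i [ij ij'].
  exact/jj'/(incr_segment_uniq block_start_lt ij ij').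
- by move=> j; exact: block_Sig.
Qed.

Lemma image_piece_pair k j :
  piece k @` [set i | j.*2 <= i <= j.*2.+1] = [set lower k j; upper k j].
Proof.
apply/seteqP; split => s.
  move=> [i /= ji <-]; have [->|->] : i = j.*2 \/ i = j.*2.+1 by lia.
    by left; rewrite piece_double.
  by right; rewrite piece_doubleS.
case=> ->; first by exists j.*2; rewrite ?piece_double //= leqnn leqnSn.
by exists j.*2.+1; rewrite ?piece_doubleS //= leqnn leqnSn.
Qed.

Lemma cut_blocks_step k : k <= n ->
  one_op K Sig Sb (Cond u (block k)) (Cond u (piece k)).
Proof.
move=> kn; split; [exact: is_cond_blocks | exact: is_cond_pieces | right; right].
split => //; exists (fun j => [set i | j.*2 <= i <= j.*2.+1]); split.
- move=> j; split; first by apply: (@ub_finite_set _ j.*2.+2) => i /andP [].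
  by exists j.*2; rewrite /= leqnn leqnSn.
- by move=> j j' jj'; apply/seteqP; split => // i [/= ji ji']; apply: jj'; lia.
- by move=> j; rewrite /= image_piece_pair; exact: Sb_halves.
Qed.

Lemma merge_pieces_step k : k <= n ->
  one_op K Sig Sb (Cond u (piece k)) (Cond u amalgam).
Proof.
move=> kn; split; [exact: is_cond_pieces | exact: is_cond_amalgam | right; left].
split => //; exists (fun m => [set i | (m.*2).-1 <= i < m.*2.+1]); split.
- by move=> m; apply: (@ub_finite_set _ m.*2.+1) => i /andP [].
- by move=> m m' mm'; apply/seteqP; split => // i [/= mi mi']; apply: mm'; lia.
- move=> m /=; have [_ _ Sm] := amalgam_spec m.
  have SK : piece k @` [set i | (m.*2).-1 <= i < m.*2.+1] `<=` K.
    by move=> _ [i _ <-]; exact: piece_K.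
  exact: (Sig1_trans hSig (finite_image_itv _ _ _) SK (merged_Sig k m kn) (Sm k kn)).
Qed.

Theorem common_extension :
  exists r, is_cond K r /\ forall k, k <= n -> Qle K Sig Sb (p k) r.
Proof.
exists (Cond u amalgam); split => [|k kn]; first exact: is_cond_amalgam.
apply: rt_trans (rt_step _ _ _ _ (merge_pieces_step k kn)).
apply: rt_trans (rt_step _ _ _ _ (cut_blocks_step k kn)).
exact: rt_step (glue_blocks_step k kn).
Qed.

End Amalgamation.

Theorem theorem2p4 (R : realType) (H : nat -> countType) (D : Type)
    (K : set (screature R H D))
    (Sig : set (screature R H D) -> set (screature R H D))
    (Sb : screature R H D -> set (set (screature R H D))) :
  (forall i, exists x y : H i, x <> y) ->
  semi_creating_triple K Sig Sb ->
  linked K Sig -> semi_gluing K Sig -> cutting_property K Sb ->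
  sigma_star_linked (is_cond K) (Qle K Sig Sb).
Proof.
move=> hH [hK hSig hSb] hlink hglue hcut; apply: code_sigma_star_linked => n.
pose pt i : H i := projT1 (cid (hH i)).
pose M : R := (n%:R + 5)%R.
have hM : (n%:R + 4 < M)%R by rewrite ltrD2l ltr_nat.
have decide q : exists q', is_cond K q ->
    [/\ Qle K Sig Sb q q', is_cond K q' & forall i, M%:E < snor (ct q' i)].
  have [cq|ncq] := pselect (is_cond K q); last by exists q => /ncq.
  by have [q' [qq' cq'] q'M] := decide_snor_gt Sig Sb M hK cq; exists q'.
have [f fP] := choice _ decide.
exists (fun q => pval_code (cw (f q))) => q qQ.
have fq k (kn : (k <= n)%N) := fP _ (qQ k kn).1.
have fcond k (kn : (k <= n)%N) : is_cond K (f (q k)) by case: (fq k kn).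
have fM k i (kn : (k <= n)%N) : M%:E < snor (ct (f (q k)) i) by case: (fq k kn).
have stem k (kn : (k <= n)%N) : cw (f (q k)) = cw (f (q 0%N)).
  have [fk _ _ _ _] := fcond k kn; have [f0 _ _ _ _] := fcond 0%N (leq0n n).
  exact: (pval_code_inj fk f0 (qQ k kn).2).
have [r [cr qr]] := @common_extension _ _ _ _ _ _ pt hK hSig hSb hlink hglue hcut
  n _ (f \o q) M fcond stem hM fM.
by exists r; split => // k kn; case: (fq k kn) => qf _ _; exact: rt_trans qf (qr k kn).
Qed.
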